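(* For every nonreal $z\in\mathbb C$ and every vertex $x_0$ with $\ell(x_0)\ge1$ there exists a function $v:\Gamma_{x_0}\to\mathbb C$, not identically zero, such that $(Jv)(x)=zv(x)$ for all $x\in\Gamma_{x_0}\setminus\{x_0\}$. Any such $v$ satisfies $v(x)\ne0$ for all $x\in\Gamma_{x_0}$, and it is unique up to a constant multiple.
   Context: Let $\Gamma$ be an infinite connected tree whose vertices are arranged in levels $\ell(x)\in\{0,1,2,\dots\}$: every vertex $x$ is adjacent to exactly one vertex $x'$ with $\ell(x')=\ell(x)+1$; for $\ell(x)\ge 1$ the set $N_x=\{y:\ y'=x\}$ of neighbours of $x$ on level $\ell(x)-1$ is finite and nonempty; $N_x=\emptyset$ if $\ell(x)=0$; there are no other edges. For $x\in\Gamma$, $\Gamma_x$ is the finite subtree consisting of $x$ and all its descendants. Fix $\lambda_x>0$, $\beta_x\in\mathbb R$. The Jacobi matrix $J$ acts on functions $v$ by $(Jv)(x)=\lambda_x v(x')+\beta_x v(x)+\sum_{y\in N_x}\lambda_y v(y)$. *)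

(* The complex field is abstracted as an arbitrary
   numClosedFieldType C (C = complex numbers is an instance). *)
From HB Require Import structures.
From mathcomp Require Import all_boot all_order all_algebra.
Set Implicit Arguments. Unset Strict Implicit. Unset Printing Implicit Defensive.
Import Order.TTheory GRing.Theory Num.Theory.
Local Open Scope ring_scope.

(* A leveled tree as in the paper: vertex type V, level function lvl,
   parent map par (x |-> x'), and children list ch x enumerating N_x. *)
Definition leveled_tree (V : eqType) (lvl : V -> nat) (par : V -> V)
  (ch : V -> seq V) : Prop :=
  [/\ (forall x, lvl (par x) = (lvl x).+1),
      (forall x y, (y \in ch x) = (par y == x)),
      (forall x, uniq (ch x)),
      (forall x, (ch x == [::]) = (lvl x == 0%N))
    &
      (forall x y, exists m n, iter m par x = iter n par y)].

(* y belongs to Gamma_x (x itself or a descendant of x) *)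
Definition in_subtree (V : eqType) (par : V -> V) (x y : V) : Prop :=
  exists n, iter n par y = x.

Definition Jop (V : eqType) (C : numClosedFieldType) (par : V -> V)
  (ch : V -> seq V) (lam beta : V -> C) (v : V -> C) (x : V) : C :=
  lam x * v (par x) + beta x * v x + \sum_(y <- ch x) lam y * v y.

Definition sub_solution (V : eqType) (C : numClosedFieldType) (par : V -> V)
  (ch : V -> seq V) (lam beta : V -> C) (z : C) (x0 : V) (v : V -> C) : Prop :=
  (exists x, in_subtree par x0 x /\ v x != 0) /\
  (forall x, in_subtree par x0 x -> x <> x0 -> Jop par ch lam beta v x = z * v x).

From HB Require Import structures.
From mathcomp Require Import all_boot all_order all_algebra.
From mathcomp Require Import ring zify.
Import Order.TTheory GRing.Theory Num.Theory.

Set Implicit Arguments.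
Unset Strict Implicit.
Unset Printing Implicit Defensive.

Local Open Scope ring_scope.

(* Any solution on a subtree satisfies v(x') = r(x) v(x) with a ratio r(x)
   depending only on the finite subtree below x: it is computed upward from the
   leaves by r(x) = (z - beta_x - sum_{c in N_x} lam_c / r(c)) / lam_x.  Since
   lam > 0 and beta is real, Im r(x) has the sign of Im z (a Herglotz-type
   property), so r never vanishes.  Hence every solution is determined by its
   value at x0, can be built from v(x0) = 1 downward, and vanishes nowhere
   unless it vanishes identically. *)

Lemma Im_invr_sign (C : numClosedFieldType) (a w : C) :
  0 <= a * 'Im w -> a * 'Im w^-1 <= 0.
Proof.
move=> aw_ge0; rewrite ImV mulrA mulrN mulNr oppr_le0.
by rewrite mulr_ge0 // invr_ge0 exprn_ge0.
Qed.

Section Ratio.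

Variables (V : eqType) (lvl : V -> nat) (par : V -> V) (ch : V -> seq V).
Variables (C : numClosedFieldType) (lam beta : V -> C) (z : C).

Hypothesis lvl_par : forall x, lvl (par x) = (lvl x).+1.
Hypothesis mem_ch : forall x y, (y \in ch x) = (par y == x).
Hypothesis lam_gt0 : forall x, 0 < lam x.
Hypothesis beta_real : forall x, beta x \is Num.real.
Hypothesis z_nonreal : z \isn't Num.real.

Fixpoint ratio_approx (k : nat) (x : V) : C :=
  if k is k'.+1 then
    (z - beta x - \sum_(c <- ch x) lam c / ratio_approx k' c) / lam x
  else 1.

(* The fuel (lvl x).+1 reaches exactly the leaves below x. *)
Definition ratio (x : V) : C := ratio_approx (lvl x).+1 x.

Lemma Im_ratio_approx_step k x :
  (forall c, 0 <= 'Im z * 'Im (ratio_approx k c)) ->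
  0 < 'Im z * 'Im (ratio_approx k.+1 x).
Proof.
move=> IH /=.
have lamVx_real : (lam x)^-1 \is Num.real by rewrite rpredV gtr0_real.
rewrite ImMr // !raddfB /= (Creal_ImP _ (beta_real x)) subr0 raddf_sum /=.
rewrite mulrA divr_gt0 // mulrBr mulr_sumr subr_gt0.
have Imz2_gt0 : 0 < 'Im z * 'Im z.
  have Imz_neq0 : 'Im z != 0 by apply: contra z_nonreal => /eqP/Creal_ImP.
  by rewrite -expr2 -real_normK ?Creal_Im // exprn_gt0 // normr_gt0.
apply: le_lt_trans Imz2_gt0; rewrite -oppr_ge0 -sumrN; apply: sumr_ge0 => c _.
rewrite ImMl ?gtr0_real // mulrCA oppr_ge0 pmulr_rle0 //.
exact: Im_invr_sign.
Qed.

Lemma Im_ratio_approx_gt0 k x : 0 < 'Im z * 'Im (ratio_approx k.+1 x).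
Proof.
elim: k x => [|k IHk] x; apply: Im_ratio_approx_step => c.
  by rewrite /= (Creal_ImP _ (rpred1 _)) mulr0.
exact/ltW.
Qed.

Lemma ratio_neq0 x : ratio x != 0.
Proof.
have := Im_ratio_approx_gt0 (lvl x) x; rewrite -/(ratio x).
by apply: contraTneq => ->; rewrite raddf0 mulr0 ltxx.
Qed.

Lemma lvl_ch x c : c \in ch x -> lvl x = (lvl c).+1.
Proof. by rewrite mem_ch => /eqP <-. Qed.

Lemma ratio_rec x :
  lam x * ratio x = z - beta x - \sum_(c <- ch x) lam c / ratio c.
Proof.
rewrite /ratio /= mulrC divfK ?gt_eqF //; congr (_ - _).
by rewrite !big_seq; apply: eq_bigr => c /lvl_ch ->.
Qed.

Definition ratio_law (v : V -> C) (x : V) : Prop := v (par x) = ratio x * v x.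

Lemma sum_ch_ratio_law v x : (forall c, c \in ch x -> ratio_law v c) ->
  \sum_(c <- ch x) lam c * v c = v x * \sum_(c <- ch x) lam c / ratio c.
Proof.
move=> law_ch; rewrite mulr_sumr !big_seq; apply: eq_bigr => c cx.
have := law_ch c cx; rewrite /ratio_law; move: cx; rewrite mem_ch => /eqP -> ->.
by rewrite [RHS]mulrC mulrA divfK ?ratio_neq0.
Qed.

Lemma Jop_ratio_law v x : (forall c, c \in ch x -> ratio_law v c) ->
  Jop par ch lam beta v x = z * v x + lam x * (v (par x) - ratio x * v x).
Proof.
move=> law_ch; rewrite /Jop sum_ch_ratio_law // mulrBr mulrA ratio_rec; ring.
Qed.

Variable x0 : V.

Notation below := (in_subtree par x0).

Lemma lvl_iter n y : lvl (iter n par y) = (lvl y + n)%N.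
Proof. by elim: n => [|n IH]; rewrite ?addn0 // iterS lvl_par IH addnS. Qed.

Lemma below_lvl y : below y -> (lvl y <= lvl x0)%N.
Proof. by case=> n <-; rewrite lvl_iter leq_addr. Qed.

Lemma below_ch x c : below x -> c \in ch x -> below c /\ c <> x0.
Proof.
move=> [n xn] cx; split.
  by exists n.+1; rewrite iterSr; move: cx; rewrite mem_ch => /eqP ->.
move=> c_x0; have := below_lvl (ex_intro _ n xn).
by rewrite (lvl_ch cx) c_x0 ltnn.
Qed.

Lemma below_ind (P : V -> Prop) : P x0 ->
  (forall x, below x -> x <> x0 -> P (par x) -> P x) ->
  forall x, below x -> P x.
Proof.
move=> P0 IH x [n]; elim: n x => [|n IHn] x /=; first by move=> ->.
move=> xn; have bx : below x by exists n.+1.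
apply: IH => //; last by apply: IHn; rewrite -iterSr.
move=> x_x0; have := lvl_iter n.+1 x; rewrite iterS xn x_x0 => /eqP.
by rewrite -{1}(addn0 (lvl x0)) eqn_add2l.
Qed.

Definition solves (v : V -> C) : Prop :=
  forall x, below x -> x <> x0 -> Jop par ch lam beta v x = z * v x.

Definition obeys_ratio_law (v : V -> C) : Prop :=
  forall x, below x -> x <> x0 -> ratio_law v x.

Lemma obeys_ratio_law_solves v : obeys_ratio_law v -> solves v.
Proof.
move=> law x bx nx; rewrite Jop_ratio_law ?(law x) ?subrr ?mulr0 ?addr0 //.
by move=> c cx; have [bc nc] := below_ch bx cx; apply: law.
Qed.

Lemma solves_obeys_ratio_law v : solves v -> obeys_ratio_law v.
Proof.
move=> sol; suff law n x : (lvl x < n)%N -> below x -> x <> x0 -> ratio_law v x.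
  by move=> x; apply: (law (lvl x).+1).
elim: n x => [//|n IHn] x lt_x bx nx.
have law_ch c : c \in ch x -> ratio_law v c.
  move=> cx; have [bc nc] := below_ch bx cx.
  by apply: IHn => //; move: lt_x; rewrite (lvl_ch cx).
move: (sol x bx nx); rewrite Jop_ratio_law // -{2}[z * v x]addr0 => /addrI.
by move/eqP; rewrite mulf_eq0 gt_eqF //= subr_eq0 => /eqP.
Qed.

Lemma ratio_law_scale v w c : obeys_ratio_law v -> obeys_ratio_law w ->
  w x0 = c * v x0 -> forall x, below x -> w x = c * v x.
Proof.
move=> lawv laww wv0; apply: below_ind => // x bx nx.
by rewrite laww // lawv // mulrCA => /(mulfI (ratio_neq0 x)).
Qed.

Lemma ratio_law_neq0 v : obeys_ratio_law v -> v x0 != 0 ->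
  forall x, below x -> v x != 0.
Proof.
move=> law v0; apply: below_ind => // x bx nx.
by rewrite law // mulf_eq0 negb_or => /andP[].
Qed.

Fixpoint path_ratio (k : nat) (y : V) : C :=
  if k is k'.+1 then path_ratio k' (par y) / ratio y else 1.

Definition path_solution (y : V) : C := path_ratio (lvl x0 - lvl y) y.

Lemma path_solution_x0 : path_solution x0 = 1.
Proof. by rewrite /path_solution subnn. Qed.

Lemma path_solution_ratio_law : obeys_ratio_law path_solution.
Proof.
move=> x [[|n] //= xn] _; rewrite /ratio_law /path_solution.
have L := lvl_iter n.+1 x; rewrite iterS xn in L.
have -> : (lvl x0 - lvl (par x) = n)%N by rewrite lvl_par L; lia.
have -> : (lvl x0 - lvl x = n.+1)%N by rewrite L; lia.
by rewrite /= mulrC divfK ?ratio_neq0.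
Qed.

End Ratio.

Theorem lemma3 (V : eqType) (lvl : V -> nat) (par : V -> V) (ch : V -> seq V)
  (C : numClosedFieldType) (lam beta : V -> C)
  (Htree : leveled_tree lvl par ch)
  (Hlam : forall x, 0 < lam x) (Hbeta : forall x, beta x \is Num.real)
  (z : C) (hz : z \isn't Num.real) (x0 : V) (hx0 : (1 <= lvl x0)%N) :
  (exists v, sub_solution par ch lam beta z x0 v) /\
  (forall v, sub_solution par ch lam beta z x0 v ->
     (forall x, in_subtree par x0 x -> v x != 0) /\
     (forall w, sub_solution par ch lam beta z x0 w ->
        exists c : C, forall x, in_subtree par x0 x -> w x = c * v x)).
Proof.
case: Htree => lvl_par mem_ch _ _ _.
have law := solves_obeys_ratio_law lvl_par mem_ch Hlam Hbeta hz (x0 := x0).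
have scale := ratio_law_scale (ch := ch) lvl_par Hlam Hbeta hz (x0 := x0).
split.
  exists (path_solution lvl par ch lam beta z x0); split.
    by exists x0; split; [exists 0%N | rewrite path_solution_x0 oner_neq0].
  apply: obeys_ratio_law_solves => //.
  exact: path_solution_ratio_law.
move=> v [[x1 [bx1 vx1]] /law lawv].
have v0 : v x0 != 0.
  apply: contraNneq vx1 => v0; apply/eqP.
  by rewrite (scale v v 0 lawv lawv) ?v0 ?mul0r.
split; first exact: (ratio_law_neq0 lvl_par lawv v0).
move=> w [_ /law laww]; exists (w x0 / v x0).
by apply: scale => //; rewrite divfK.
Qed.
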